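(* In the calculus $\lambda^{MD}$, if $\Gamma\vdash M_1:\tau@A$, then there is no infinite sequence $(M_i)_{i\ge1}$ of terms such that $M_i\longrightarrow M_{i+1}$ for all $i\ge1$, where $\longrightarrow$ is full reduction.
   Context: The calculus $\lambda^{MD}$. Fix countably infinite, pairwise disjoint sets of type-level constants ($X$), variables ($x,y,z$), constants ($c$) and stage variables ($\alpha,\beta,\gamma$). A stage ($A,B,C$) is a finite sequence of stage variables, $\varepsilon$ is the empty stage, and juxtaposition ($A\alpha$, $AB$) denotes concatenation. Kinds, types, terms, signatures and type environments are: $K ::= * \mid \Pi x{:}\tau.K$; $\tau,\sigma ::= X \mid \Pi x{:}\tau.\sigma \mid \tau\,M \mid \triangleright_\alpha\tau \mid \forall\alpha.\tau$; $M,N ::= c \mid x \mid \lambda x{:}\tau.M \mid M\,N \mid \blacktriangleright_\alpha M \mid \blacktriangleleft_\alpha M \mid \Lambda\alpha.M \mid M\,A \mid \%_\alpha M$; $\Sigma ::= \emptyset \mid \Sigma, X{::}K \mid \Sigma, c{:}\tau$; $\Gamma ::= \emptyset \mid \Gamma, x{:}\tau@A$. ($\blacktriangleright_\alpha M$ is quotation, $\blacktriangleleft_\alpha M$ escape, $M\,A$ applies a term to a stage, $\%_\alpha M$ is cross-stage persistence, $\triangleright_\alpha\tau$ is a code type.) $\lambda,\Pi$ bind $x$; $\Lambda,\forall$ bind $\alpha$; syntax is identified up to renaming of bound (stage) variables; $\mathrm{FTV}(\cdot)$ is the set of free stage variables. $M[x\mapsto N]$ (and its extension to types, kinds and type environments)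 is capture-avoiding substitution. Stage substitution $[\alpha\mapsto A]$ replaces free occurrences of $\alpha$ in stages by the sequence $A$, acting homomorphically on terms, types, kinds and environments, with $(\blacktriangleright_\beta M)[\alpha\mapsto A]=\blacktriangleright_{\beta[\alpha\mapsto A]}(M[\alpha\mapsto A])$ and likewise for $\blacktriangleleft,\%,\triangleright$, where $\blacktriangleright_{\alpha_1\cdots\alpha_n}M=\blacktriangleright_{\alpha_1}\cdots\blacktriangleright_{\alpha_n}M$, $\triangleright_{\alpha_1\cdots\alpha_n}\tau=\triangleright_{\alpha_1}\cdots\triangleright_{\alpha_n}\tau$, $\blacktriangleleft_{\alpha_1\cdots\alpha_n}M=\blacktriangleleft_{\alpha_n}\cdots\blacktriangleleft_{\alpha_1}M$, $\%_{\alpha_1\cdots\alpha_n}M=\%_{\alpha_n}\cdots\%_{\alpha_1}M$ (just $M$, resp. $\tau$, when $n=0$). Full reduction $\longrightarrow$ is the least relation on terms that is closed under all term-forming constructs (reduction may occur anywhere, including under $\lambda$, $\Lambda$, $\blacktriangleright_\alpha$, $\blacktriangleleft_\alpha$, $\%_\alpha$) and contains $(\lambda x{:}\tau.M)\,N\longrightarrow M[x\mapsto N]$, $\blacktriangleleft_\alpha\blacktriangleright_\alpha M\longrightarrow M$, and $(\Lambda\alpha.M)\,A\longrightarrow M[\alpha\mapsto A]$. Type system. Relative to a fixed signature $\Sigma$, the judgments $\vdash\Sigma$, $\vdash\Gamma$, $\Gamma\vdash K\ \mathrm{kind}@A$, $\Gamma\vdash\tau::K@A$, $\Gamma\vdash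 M:\tau@A$, $\Gamma\vdash K\equiv J@A$, $\Gamma\vdash\tau\equiv\sigma::K@A$, $\Gamma\vdash M\equiv N:\tau@A$ are defined simultaneously by the following rules; signatures and environments are assumed well formed throughout. Well-formedness: $\vdash\emptyset$; from $\vdash\Sigma$, $\emptyset\vdash K\ \mathrm{kind}@\varepsilon$, $X\notin dom(\Sigma)$ infer $\vdash\Sigma,X{::}K$; from $\vdash\Sigma$, $\emptyset\vdash\tau::*@\varepsilon$, $c\notin dom(\Sigma)$ infer $\vdash\Sigma,c{:}\tau$; $\vdash\emptyset$; from $\vdash\Gamma$, $\Gamma\vdash\tau::*@A$, $x$ not declared in $\Gamma$ infer $\vdash\Gamma,x{:}\tau@A$. Kinds: $\Gamma\vdash *\ \mathrm{kind}@A$; if $\Gamma\vdash\tau::*@A$ and $\Gamma,x{:}\tau@A\vdash K\ \mathrm{kind}@A$ then $\Gamma\vdash\Pi x{:}\tau.K\ \mathrm{kind}@A$. Kinding: if $X{::}K\in\Sigma$ then $\Gamma\vdash X::K@A$; if $\Gamma\vdash\tau::*@A$ and $\Gamma,x{:}\tau@A\vdash\sigma::*@A$ then $\Gamma\vdash\Pi x{:}\tau.\sigma::*@A$; if $\Gamma\vdash\sigma::\Pi x{:}\tau.K@A$ and $\Gamma\vdash M:\tau@A$ then $\Gamma\vdash\sigma\,M::K[x\mapsto M]@A$; if $\Gamma\vdash\tau::K@A$ and $\Gamma\vdash K\equiv J@A$ then $\Gamma\vdash\tau::J@A$; if $\Gamma\vdash\tau::*@A\alpha$ then $\Gamma\vdash\triangleright_\alpha\tau::*@A$;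 if $\Gamma\vdash\tau::K@A$ and $\alpha\notin\mathrm{FTV}(\Gamma)\cup\mathrm{FTV}(A)$ then $\Gamma\vdash\forall\alpha.\tau::K@A$; if $\Gamma\vdash\tau::*@A$ then $\Gamma\vdash\tau::*@A\alpha$. Typing: if $c{:}\tau\in\Sigma$ then $\Gamma\vdash c:\tau@A$ (any $A$); if $x{:}\tau@A\in\Gamma$ then $\Gamma\vdash x:\tau@A$; if $\Gamma\vdash\sigma::*@A$ and $\Gamma,x{:}\sigma@A\vdash M:\tau@A$ then $\Gamma\vdash\lambda x{:}\sigma.M:\Pi x{:}\sigma.\tau@A$; if $\Gamma\vdash M:\Pi x{:}\sigma.\tau@A$ and $\Gamma\vdash N:\sigma@A$ then $\Gamma\vdash M\,N:\tau[x\mapsto N]@A$; if $\Gamma\vdash M:\tau@A$ and $\Gamma\vdash\tau\equiv\sigma::K@A$ then $\Gamma\vdash M:\sigma@A$; if $\Gamma\vdash M:\tau@A\alpha$ then $\Gamma\vdash\blacktriangleright_\alpha M:\triangleright_\alpha\tau@A$; if $\Gamma\vdash M:\triangleright_\alpha\tau@A$ then $\Gamma\vdash\blacktriangleleft_\alpha M:\tau@A\alpha$; if $\Gamma\vdash M:\tau@A$ and $\alpha\notin\mathrm{FTV}(\Gamma)\cup\mathrm{FTV}(A)$ then $\Gamma\vdash\Lambda\alpha.M:\forall\alpha.\tau@A$; if $\Gamma\vdash M:\forall\alpha.\tau@A$ then $\Gamma\vdash M\,B:\tau[\alpha\mapsto B]@A$; if $\Gamma\vdash M:\tau@A$ then $\Gamma\vdash\%_\alpha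 M:\tau@A\alpha$. Equivalences: each equivalence judgment is reflexive (on well-formed kinds, kinded types, typed terms), symmetric and transitive. Kinds: $\Gamma\vdash\tau\equiv\sigma::*@A$ and $\Gamma,x{:}\tau@A\vdash K\equiv J@A$ give $\Gamma\vdash\Pi x{:}\tau.K\equiv\Pi x{:}\sigma.J@A$; $\Gamma\vdash K\equiv J@A$ gives $\Gamma\vdash K\equiv J@A\alpha$. Types: $\Gamma\vdash\tau\equiv\sigma::*@A$ and $\Gamma,x{:}\tau@A\vdash\rho\equiv\pi::*@A$ give $\Gamma\vdash\Pi x{:}\tau.\rho\equiv\Pi x{:}\sigma.\pi::*@A$; $\Gamma\vdash\tau\equiv\sigma::\Pi x{:}\rho.K@A$ and $\Gamma\vdash M\equiv N:\rho@A$ give $\Gamma\vdash\tau\,M\equiv\sigma\,N::K[x\mapsto M]@A$; $\Gamma\vdash\tau\equiv\sigma::*@A\alpha$ gives $\Gamma\vdash\triangleright_\alpha\tau\equiv\triangleright_\alpha\sigma::*@A$; $\Gamma\vdash\tau\equiv\sigma::*@A$ with $\alpha\notin\mathrm{FTV}(\Gamma)\cup\mathrm{FTV}(A)$ gives $\Gamma\vdash\forall\alpha.\tau\equiv\forall\alpha.\sigma::*@A$; $\Gamma\vdash\tau\equiv\sigma::*@A$ gives $\Gamma\vdash\tau\equiv\sigma::*@A\alpha$. Terms: congruence rules mirroring the typing rules for $\lambda$ ($\Gamma\vdash\tau\equiv\sigma::*@A$ and $\Gamma,x{:}\tau@A\vdash M\equiv N:\rho@A$ give $\Gamma\vdash\lambda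 x{:}\tau.M\equiv\lambda x{:}\sigma.N:\Pi x{:}\tau.\rho@A$), application, $\blacktriangleright_\alpha$, $\blacktriangleleft_\alpha$, $\Lambda\alpha$ (same side condition), stage application ($\Gamma\vdash M\equiv N:\forall\alpha.\tau@A$ gives $\Gamma\vdash M\,B\equiv N\,B:\tau[\alpha\mapsto B]@A$) and $\%_\alpha$; and the axioms: if $\Gamma,x{:}\sigma@A\vdash M:\tau@A$ and $\Gamma\vdash N:\sigma@A$ then $\Gamma\vdash(\lambda x{:}\sigma.M)\,N\equiv M[x\mapsto N]:\tau[x\mapsto N]@A$; if $\Gamma\vdash M\equiv N:\tau@A$ then $\Gamma\vdash\blacktriangleleft_\alpha\blacktriangleright_\alpha M\equiv N:\tau@A$; if $\Gamma\vdash\Lambda\alpha.M:\forall\alpha.\tau@A$ then $\Gamma\vdash(\Lambda\alpha.M)\,\varepsilon\equiv M[\alpha\mapsto\varepsilon]:\tau[\alpha\mapsto\varepsilon]@A$; if $\Gamma\vdash M:\tau@A\alpha$ and $\Gamma\vdash M:\tau@A$ then $\Gamma\vdash\%_\alpha M\equiv M:\tau@A\alpha$. *)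

(* The calculus lambda^MD, de Bruijn presentation.
   - term variables: de Bruijn indices (0 = innermost lambda/Pi binder);
   - stage variables: de Bruijn indices (0 = innermost Lambda/forall binder);
     indices escaping all binders play the role of the free (global) stage
     variables of the named presentation. *)
From Stdlib Require Import List Arith Bool.
Local Open Scope bool_scope.
Import ListNotations.

Definition stage := list nat.

Inductive ty : Type :=
| TConst (X : nat)
| TPi (t1 t2 : ty)
| TApp (t : ty) (M : tm)
| TCode (a : nat) (t : ty)
| TAll (t : ty)
with tm : Type :=
| Const (c : nat)
| Var (n : nat)
| Lam (t : ty) (M : tm)
| App (M N : tm)
| Quote (a : nat) (M : tm)
| Esc (a : nat) (M : tm)
| SLam (M : tm)
| SApp (M : tm) (A : stage)
| Csp (a : nat) (M : tm).

Inductive kind : Type :=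
| KStar
| KPi (t : ty) (K : kind).

Definition sup (s : nat -> stage) : nat -> stage :=
  fun j => match j with 0 => [0] | S j => map S (s j) end.

Definition codes (l : stage) (t : ty) : ty := fold_right TCode t l.
Definition quotes (l : stage) (M : tm) : tm := fold_right Quote M l.
(* <|_{a1...an} M = <|_an ... <|_a1 M ; likewise for % *)
Definition escs (l : stage) (M : tm) : tm := fold_left (fun acc a => Esc a acc) l M.
Definition csps (l : stage) (M : tm) : tm := fold_left (fun acc a => Csp a acc) l M.

Definition ssub_stage (s : nat -> stage) (A : stage) : stage := flat_map s A.

Fixpoint ssub_ty (s : nat -> stage) (t : ty) {struct t} : ty :=
  match t with
  | TConst X => TConst X
  | TPi t1 t2 => TPi (ssub_ty s t1) (ssub_ty s t2)
  | TApp t M => TApp (ssub_ty s t) (ssub_tm s M)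
  | TCode a t => codes (s a) (ssub_ty s t)
  | TAll t => TAll (ssub_ty (sup s) t)
  end
with ssub_tm (s : nat -> stage) (M : tm) {struct M} : tm :=
  match M with
  | Const c => Const c
  | Var n => Var n
  | Lam t M => Lam (ssub_ty s t) (ssub_tm s M)
  | App M N => App (ssub_tm s M) (ssub_tm s N)
  | Quote a M => quotes (s a) (ssub_tm s M)
  | Esc a M => escs (s a) (ssub_tm s M)
  | SLam M => SLam (ssub_tm (sup s) M)
  | SApp M A => SApp (ssub_tm s M) (ssub_stage s A)
  | Csp a M => csps (s a) (ssub_tm s M)
  end.

Definition sopen_sub (B : stage) : nat -> stage :=
  fun j => match j with 0 => B | S j => [j] end.
Definition sopen_ty (t : ty) (B : stage) : ty := ssub_ty (sopen_sub B) t.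
Definition sopen_tm (M : tm) (B : stage) : tm := ssub_tm (sopen_sub B) M.

(* abstraction of the (free) stage variable i: builds the body of
   forall i. t  /  Lambda i. M  from t / M *)
Definition sclose_sub (i : nat) : nat -> stage :=
  fun j => if Nat.eqb j i then [0] else [S j].
Definition sclose_ty (i : nat) (t : ty) : ty := ssub_ty (sclose_sub i) t.
Definition sclose_tm (i : nat) (M : tm) : tm := ssub_tm (sclose_sub i) M.

Definition sfv_stage (i : nat) (A : stage) : bool := existsb (Nat.eqb i) A.

Fixpoint sfv_ty (i : nat) (t : ty) {struct t} : bool :=
  match t with
  | TConst _ => false
  | TPi t1 t2 => sfv_ty i t1 || sfv_ty i t2
  | TApp t M => sfv_ty i t || sfv_tm i M
  | TCode a t => Nat.eqb i a || sfv_ty i t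
  | TAll t => sfv_ty (S i) t
  end
with sfv_tm (i : nat) (M : tm) {struct M} : bool :=
  match M with
  | Const _ => false
  | Var _ => false
  | Lam t M => sfv_ty i t || sfv_tm i M
  | App M N => sfv_tm i M || sfv_tm i N
  | Quote a M | Esc a M | Csp a M => Nat.eqb i a || sfv_tm i M
  | SLam M => sfv_tm (S i) M
  | SApp M A => sfv_tm i M || sfv_stage i A
  end.

Definition upr (r : nat -> nat) : nat -> nat :=
  fun n => match n with 0 => 0 | S n => S (r n) end.

Fixpoint ren_ty (r : nat -> nat) (t : ty) {struct t} : ty :=
  match t with
  | TConst X => TConst X
  | TPi t1 t2 => TPi (ren_ty r t1) (ren_ty (upr r) t2)
  | TApp t M => TApp (ren_ty r t) (ren_tm r M)
  | TCode a t => TCode a (ren_ty r t)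
  | TAll t => TAll (ren_ty r t)
  end
with ren_tm (r : nat -> nat) (M : tm) {struct M} : tm :=
  match M with
  | Const c => Const c
  | Var n => Var (r n)
  | Lam t M => Lam (ren_ty r t) (ren_tm (upr r) M)
  | App M N => App (ren_tm r M) (ren_tm r N)
  | Quote a M => Quote a (ren_tm r M)
  | Esc a M => Esc a (ren_tm r M)
  | SLam M => SLam (ren_tm r M)
  | SApp M A => SApp (ren_tm r M) A
  | Csp a M => Csp a (ren_tm r M)
  end.

Definition tup (s : nat -> tm) : nat -> tm :=
  fun n => match n with 0 => Var 0 | S n => ren_tm S (s n) end.
(* lifting a term substitution under a stage binder *)
Definition tsup (s : nat -> tm) : nat -> tm :=
  fun n => ssub_tm (fun j => [S j]) (s n).

Fixpoint tsub_ty (s : nat -> tm) (t : ty) {struct t} : ty :=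
  match t with
  | TConst X => TConst X
  | TPi t1 t2 => TPi (tsub_ty s t1) (tsub_ty (tup s) t2)
  | TApp t M => TApp (tsub_ty s t) (tsub_tm s M)
  | TCode a t => TCode a (tsub_ty s t)
  | TAll t => TAll (tsub_ty (tsup s) t)
  end
with tsub_tm (s : nat -> tm) (M : tm) {struct M} : tm :=
  match M with
  | Const c => Const c
  | Var n => s n
  | Lam t M => Lam (tsub_ty s t) (tsub_tm (tup s) M)
  | App M N => App (tsub_tm s M) (tsub_tm s N)
  | Quote a M => Quote a (tsub_tm s M)
  | Esc a M => Esc a (tsub_tm s M)
  | SLam M => SLam (tsub_tm (tsup s) M)
  | SApp M A => SApp (tsub_tm s M) A
  | Csp a M => Csp a (tsub_tm s M)
  end.

Fixpoint tsub_kind (s : nat -> tm) (K : kind) : kind :=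
  match K with
  | KStar => KStar
  | KPi t K => KPi (tsub_ty s t) (tsub_kind (tup s) K)
  end.

Definition topen_sub (N : tm) : nat -> tm :=
  fun n => match n with 0 => N | S n => Var n end.
Definition topen_ty (t : ty) (N : tm) : ty := tsub_ty (topen_sub N) t.
Definition topen_tm (M : tm) (N : tm) : tm := tsub_tm (topen_sub N) M.
Definition topen_kind (K : kind) (N : tm) : kind := tsub_kind (topen_sub N) K.

Inductive red : tm -> tm -> Prop :=
| red_beta t M N : red (App (Lam t M) N) (topen_tm M N)
| red_esc a M : red (Esc a (Quote a M)) M
| red_sbeta M A : red (SApp (SLam M) A) (sopen_tm M A)
| red_lam t M M' : red M M' -> red (Lam t M) (Lam t M')
| red_appl M M' N : red M M' -> red (App M N) (App M' N)
| red_appr M N N' : red N N' -> red (App M N) (App M N')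
| red_quote a M M' : red M M' -> red (Quote a M) (Quote a M')
| red_escc a M M' : red M M' -> red (Esc a M) (Esc a M')
| red_slam M M' : red M M' -> red (SLam M) (SLam M')
| red_sapp M M' A : red M M' -> red (SApp M A) (SApp M' A)
| red_csp a M M' : red M M' -> red (Csp a M) (Csp a M').

Inductive decl : Type :=
| DType (X : nat) (K : kind)
| DConst (c : nat) (t : ty).
Definition sig := list decl.

(* environment: head = most recently declared variable (de Bruijn index 0);
   an entry (t, A) is x : t @ A, with t relative to the entries after it *)
Definition env := list (ty * stage).

Definition sfv_env (i : nat) (G : env) : bool :=
  existsb (fun p => sfv_ty i (fst p) || sfv_stage i (snd p)) G.

Definition sfresh (i : nat) (G : env) (A : stage) : Prop :=
  sfv_env i G = false /\ sfv_stage i A = false.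

Section Judgments.
Variable Sg : sig.

Inductive wf_env : env -> Prop :=
| wfe_nil : wf_env []
| wfe_cons G t A : wf_env G -> has_kind G t KStar A -> wf_env ((t, A) :: G)

with wf_kind : env -> kind -> stage -> Prop :=
| wk_star G A : wf_env G -> wf_kind G KStar A
| wk_pi G t K A : has_kind G t KStar A -> wf_kind ((t, A) :: G) K A ->
    wf_kind G (KPi t K) A

with has_kind : env -> ty -> kind -> stage -> Prop :=
| hk_const G X K A : wf_env G -> In (DType X K) Sg -> has_kind G (TConst X) K A
| hk_pi G t s A : has_kind G t KStar A -> has_kind ((t, A) :: G) s KStar A ->
    has_kind G (TPi t s) KStar A
| hk_app G s t K M A : has_kind G s (KPi t K) A -> has_type G M t A ->
    has_kind G (TApp s M) (topen_kind K M) A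
| hk_conv G t K J A : has_kind G t K A -> eq_kind G K J A -> has_kind G t J A
| hk_code G t A a : has_kind G t KStar (A ++ [a]) -> has_kind G (TCode a t) KStar A
| hk_all G t K A i : has_kind G t K A -> sfresh i G A ->
    has_kind G (TAll (sclose_ty i t)) K A
| hk_weak G t A a : has_kind G t KStar A -> has_kind G t KStar (A ++ [a])

with has_type : env -> tm -> ty -> stage -> Prop :=
| ht_const G c t A : wf_env G -> In (DConst c t) Sg -> has_type G (Const c) t A
| ht_var G n t A : wf_env G -> nth_error G n = Some (t, A) ->
    has_type G (Var n) (ren_ty (fun k => S n + k) t) A
| ht_lam G s M t A : has_kind G s KStar A -> has_type ((s, A) :: G) M t A ->
    has_type G (Lam s M) (TPi s t) A
| ht_app G M N s t A : has_type G M (TPi s t) A -> has_type G N s A ->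
    has_type G (App M N) (topen_ty t N) A
| ht_conv G M t s K A : has_type G M t A -> eq_ty G t s K A -> has_type G M s A
| ht_quote G M t A a : has_type G M t (A ++ [a]) ->
    has_type G (Quote a M) (TCode a t) A
| ht_esc G M t A a : has_type G M (TCode a t) A ->
    has_type G (Esc a M) t (A ++ [a])
| ht_slam G M t A i : has_type G M t A -> sfresh i G A ->
    has_type G (SLam (sclose_tm i M)) (TAll (sclose_ty i t)) A
| ht_sapp G M t A B : has_type G M (TAll t) A ->
    has_type G (SApp M B) (sopen_ty t B) A
| ht_csp G M t A a : has_type G M t A -> has_type G (Csp a M) t (A ++ [a])

with eq_kind : env -> kind -> kind -> stage -> Prop :=
| ek_refl G K A : wf_kind G K A -> eq_kind G K K A
| ek_sym G K J A : eq_kind G K J A -> eq_kind G J K A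
| ek_trans G K J L A : eq_kind G K J A -> eq_kind G J L A -> eq_kind G K L A
| ek_pi G t s K J A : eq_ty G t s KStar A -> eq_kind ((t, A) :: G) K J A ->
    eq_kind G (KPi t K) (KPi s J) A
| ek_weak G K J A a : eq_kind G K J A -> eq_kind G K J (A ++ [a])

with eq_ty : env -> ty -> ty -> kind -> stage -> Prop :=
| et_refl G t K A : has_kind G t K A -> eq_ty G t t K A
| et_sym G t s K A : eq_ty G t s K A -> eq_ty G s t K A
| et_trans G t s r K A : eq_ty G t s K A -> eq_ty G s r K A -> eq_ty G t r K A
| et_pi G t s r p A : eq_ty G t s KStar A -> eq_ty ((t, A) :: G) r p KStar A ->
    eq_ty G (TPi t r) (TPi s p) KStar A
| et_app G t s r K M N A : eq_ty G t s (KPi r K) A -> eq_tm G M N r A ->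
    eq_ty G (TApp t M) (TApp s N) (topen_kind K M) A
| et_code G t s A a : eq_ty G t s KStar (A ++ [a]) ->
    eq_ty G (TCode a t) (TCode a s) KStar A
| et_all G t s A i : eq_ty G t s KStar A -> sfresh i G A ->
    eq_ty G (TAll (sclose_ty i t)) (TAll (sclose_ty i s)) KStar A
| et_weak G t s A a : eq_ty G t s KStar A -> eq_ty G t s KStar (A ++ [a])

with eq_tm : env -> tm -> tm -> ty -> stage -> Prop :=
| eq_refl G M t A : has_type G M t A -> eq_tm G M M t A
| eq_sym G M N t A : eq_tm G M N t A -> eq_tm G N M t A
| eq_trans G M N P t A : eq_tm G M N t A -> eq_tm G N P t A -> eq_tm G M P t A
| eq_lam G t s M N r A : eq_ty G t s KStar A -> eq_tm ((t, A) :: G) M N r A ->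
    eq_tm G (Lam t M) (Lam s N) (TPi t r) A
| eq_app G M M' N N' s t A : eq_tm G M M' (TPi s t) A -> eq_tm G N N' s A ->
    eq_tm G (App M N) (App M' N') (topen_ty t N) A
| eq_quote G M N t A a : eq_tm G M N t (A ++ [a]) ->
    eq_tm G (Quote a M) (Quote a N) (TCode a t) A
| eq_esc G M N t A a : eq_tm G M N (TCode a t) A ->
    eq_tm G (Esc a M) (Esc a N) t (A ++ [a])
| eq_slam G M N t A i : eq_tm G M N t A -> sfresh i G A ->
    eq_tm G (SLam (sclose_tm i M)) (SLam (sclose_tm i N)) (TAll (sclose_ty i t)) A
| eq_sapp G M N t A B : eq_tm G M N (TAll t) A ->
    eq_tm G (SApp M B) (SApp N B) (sopen_ty t B) A
| eq_csp G M N t A a : eq_tm G M N t A ->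
    eq_tm G (Csp a M) (Csp a N) t (A ++ [a])
| eq_beta G s M t N A : has_type ((s, A) :: G) M t A -> has_type G N s A ->
    eq_tm G (App (Lam s M) N) (topen_tm M N) (topen_ty t N) A
| eq_escquote G M N t A a : eq_tm G M N t A ->
    eq_tm G (Esc a (Quote a M)) N t A
| eq_sbeta G M t A : has_type G (SLam M) (TAll t) A ->
    eq_tm G (SApp (SLam M) []) (sopen_tm M []) (sopen_ty t []) A
| eq_cspelim G M t A a : has_type G M t (A ++ [a]) -> has_type G M t A ->
    eq_tm G (Csp a M) M t (A ++ [a]).

End Judgments.

Inductive wf_sig : sig -> Prop :=
| ws_nil : wf_sig []
| ws_type Sg X K : wf_sig Sg -> wf_kind Sg [] K [] ->
    (forall K', ~ In (DType X K') Sg) -> wf_sig (DType X K :: Sg)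
| ws_const Sg c t : wf_sig Sg -> has_kind Sg [] t KStar [] ->
    (forall t', ~ In (DConst c t') Sg) -> wf_sig (DConst c t :: Sg).

(* Erase stages, stage abstractions and all type-level information.  A typed
   term erases to a simply typed lambda term over one base type: definitional
   equality of types only relates types that differ in their term arguments
   and stages, which the erasure forgets.  A beta step erases to a beta step;
   an escape-quote step or a stage beta step leaves the erasure unchanged and
   strictly decreases the number of stage abstractions, or keeps it and
   shrinks the term.  Strong normalisation of the simply typed lambda
   calculus (by Tait's reducibility method) therefore bounds every reduction
   sequence. *)

From Stdlib Require Import List Arith Lia Relation_Operators Wellfounded.

Lemma Acc_no_descending_chain {T : Type} (R : T -> T -> Prop) (x : T) :
  Acc R x -> ~ (exists f : nat -> T, f 0 = x /\ forall i, R (f (S i)) (f i)).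
Proof.
  induction 1 as [x _ IH]; intros [f [<- Hf]].
  apply (IH (f 1) (Hf 0)).
  exists (fun i => f (S i)); split; auto.
Qed.

(** * The simply typed lambda calculus *)

Inductive stype := SBase | SArr (U T : stype).
Inductive lterm := LVar (n : nat) | LConst | LLam (M : lterm) | LApp (M N : lterm).

Fixpoint lren (r : nat -> nat) (M : lterm) : lterm :=
  match M with
  | LVar n => LVar (r n)
  | LConst => LConst
  | LLam M => LLam (lren (upr r) M)
  | LApp M N => LApp (lren r M) (lren r N)
  end.

Definition lup (s : nat -> lterm) : nat -> lterm :=
  fun n => match n with 0 => LVar 0 | S n => lren S (s n) end.

Fixpoint lsubst (s : nat -> lterm) (M : lterm) : lterm :=
  match M with
  | LVar n => s n
  | LConst => LConst
  | LLam M => LLam (lsubst (lup s) M)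
  | LApp M N => LApp (lsubst s M) (lsubst s N)
  end.

Definition lscons (N : lterm) (s : nat -> lterm) : nat -> lterm :=
  fun n => match n with 0 => N | S n => s n end.

Definition lopen (N : lterm) : nat -> lterm := lscons N LVar.

Lemma lren_ext M : forall r r', (forall n, r n = r' n) -> lren r M = lren r' M.
Proof.
  induction M; intros r r' H; simpl; f_equal; auto.
  apply IHM; intros [|n]; simpl; auto.
Qed.

Lemma lsubst_ext M : forall s s', (forall n, s n = s' n) -> lsubst s M = lsubst s' M.
Proof.
  induction M; intros s s' H; simpl; f_equal; auto.
  apply IHM; intros [|n]; simpl; rewrite ?H; auto.
Qed.

Lemma lren_lren M : forall r1 r2, lren r1 (lren r2 M) = lren (fun n => r1 (r2 n)) M.
Proof.
  induction M; intros; simpl; f_equal; auto.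
  rewrite IHM; apply lren_ext; intros [|n]; reflexivity.
Qed.

Lemma lsubst_lren M : forall s r, lsubst s (lren r M) = lsubst (fun n => s (r n)) M.
Proof.
  induction M; intros; simpl; f_equal; auto.
  rewrite IHM; apply lsubst_ext; intros [|n]; reflexivity.
Qed.

Lemma lren_lsubst M : forall s r, lren r (lsubst s M) = lsubst (fun n => lren r (s n)) M.
Proof.
  induction M; intros; simpl; f_equal; auto.
  rewrite IHM; apply lsubst_ext; intros [|n]; simpl; auto.
  rewrite !lren_lren; reflexivity.
Qed.

Lemma lsubst_lsubst M : forall s s',
  lsubst s' (lsubst s M) = lsubst (fun n => lsubst s' (s n)) M.
Proof.
  induction M; intros; simpl; f_equal; auto.
  rewrite IHM; apply lsubst_ext; intros [|n]; simpl; auto.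
  rewrite lsubst_lren, lren_lsubst; reflexivity.
Qed.

Lemma lsubst_id M : lsubst LVar M = M.
Proof.
  induction M; simpl; f_equal; auto.
  rewrite <- IHM at 2; apply lsubst_ext; intros [|n]; reflexivity.
Qed.

Lemma lopen_lup N s M :
  lsubst (lopen N) (lsubst (lup s) M) = lsubst (lscons N s) M.
Proof.
  rewrite lsubst_lsubst; apply lsubst_ext; intros [|n]; simpl; auto.
  rewrite lsubst_lren; apply lsubst_id.
Qed.

Lemma lsubst_lopen s N M :
  lsubst s (lsubst (lopen N) M) = lsubst (lopen (lsubst s N)) (lsubst (lup s) M).
Proof.
  rewrite lopen_lup, lsubst_lsubst; apply lsubst_ext; intros [|n]; reflexivity.
Qed.

Inductive lstep : lterm -> lterm -> Prop :=
| lstep_beta M N : lstep (LApp (LLam M) N) (lsubst (lopen N) M)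
| lstep_lam M M' : lstep M M' -> lstep (LLam M) (LLam M')
| lstep_appl M M' N : lstep M M' -> lstep (LApp M N) (LApp M' N)
| lstep_appr M N N' : lstep N N' -> lstep (LApp M N) (LApp M N').

Lemma lstep_lsubst M M' s : lstep M M' -> lstep (lsubst s M) (lsubst s M').
Proof.
  intros H; revert s; induction H; intros s; simpl; try (constructor; auto).
  rewrite lsubst_lopen; constructor.
Qed.

(* Signature constants erase to [LConst], which therefore inhabits every type. *)
Inductive lhas_type : list stype -> lterm -> stype -> Prop :=
| lt_var G n T : nth_error G n = Some T -> lhas_type G (LVar n) T
| lt_const G T : lhas_type G LConst T
| lt_lam G M U T : lhas_type (U :: G) M T -> lhas_type G (LLam M) (SArr U T)
| lt_app G M N U T :
    lhas_type G M (SArr U T) -> lhas_type G N U -> lhas_type G (LApp M N) T.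

Definition SN : lterm -> Prop := Acc (fun N M => lstep M N).

Lemma SN_lstep M M' : SN M -> lstep M M' -> SN M'.
Proof. intros [H] st; exact (H M' st). Qed.

Lemma SN_appl M N : SN (LApp M N) -> SN M.
Proof.
  remember (LApp M N) as P eqn:EP; intros H; revert M EP.
  induction H as [P _ IH]; intros M ->.
  constructor; intros M' st; eapply IH; [apply lstep_appl, st | reflexivity].
Qed.

Lemma SN_lsubst_inv s M : SN (lsubst s M) -> SN M.
Proof.
  remember (lsubst s M) as P eqn:EP; intros H; revert M EP.
  induction H as [P _ IH]; intros M ->.
  constructor; intros M' st; eapply IH; [apply lstep_lsubst, st | reflexivity].
Qed.

Fixpoint reducible (T : stype) (M : lterm) : Prop :=
  match T with
  | SBase => SN M
  | SArr U T => forall N, reducible U N -> reducible T (LApp M N)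
  end.

Definition neutral (M : lterm) : Prop :=
  match M with LLam _ => False | _ => True end.

Lemma reducible_candidate T :
  (forall M, reducible T M -> SN M) /\
  (forall M M', reducible T M -> lstep M M' -> reducible T M') /\
  (forall M, neutral M -> (forall M', lstep M M' -> reducible T M') -> reducible T M).
Proof.
  induction T as [|U [SN_U [step_U neutral_U]] T [SN_T [step_T neutral_T]]];
    simpl; [split; [|split]|].
  - auto.
  - intros; eapply SN_lstep; eauto.
  - intros; constructor; auto.
  - assert (var_U : reducible U (LVar 0)).
    { apply neutral_U; [exact I | intros M' st; inversion st]. }
    split; [|split].
    + intros M H; apply (SN_appl M (LVar 0)), SN_T, H, var_U.
    + intros M M' H st N HN; eapply step_T; [apply H, HN | apply lstep_appl, st].
    + intros M neu H N HN.
      assert (SN_N : SN N) by auto.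
      revert HN; induction SN_N as [N _ IHN]; intros HN.
      apply neutral_T; [exact I|]; intros P st; inversion st; subst.
      * contradiction.
      * apply H; auto.
      * apply IHN; eauto.
Qed.

Lemma reducible_SN T M : reducible T M -> SN M.
Proof. apply reducible_candidate. Qed.

Lemma reducible_lstep T M M' : reducible T M -> lstep M M' -> reducible T M'.
Proof. apply reducible_candidate. Qed.

Lemma reducible_neutral T M :
  neutral M -> (forall M', lstep M M' -> reducible T M') -> reducible T M.
Proof. apply reducible_candidate. Qed.

Lemma reducible_var T n : reducible T (LVar n).
Proof. apply reducible_neutral; [exact I | intros M' st; inversion st]. Qed.

Lemma reducible_const T : reducible T LConst.
Proof. apply reducible_neutral; [exact I | intros M' st; inversion st]. Qed.

Lemma reducible_beta_redex U T M N :
  SN M -> SN N -> (forall N, reducible U N -> reducible T (lsubst (lopen N) M)) ->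
  reducible U N -> reducible T (LApp (LLam M) N).
Proof.
  intros SN_M; revert N; induction SN_M as [M _ IHM].
  intros N SN_N; induction SN_N as [N SN_N IHN]; intros Hbody HN.
  apply reducible_neutral; [exact I|]; intros P st; inversion st; subst.
  - apply Hbody, HN.
  - match goal with st' : lstep (LLam M) _ |- _ => inversion st'; subst end.
    apply IHM; [assumption | constructor; exact SN_N | | assumption].
    intros N' HN'; eapply reducible_lstep; [apply Hbody, HN' | apply lstep_lsubst; assumption].
  - apply IHN; [assumption | assumption | eapply reducible_lstep; eassumption].
Qed.

Lemma reducible_lam U T M :
  (forall N, reducible U N -> reducible T (lsubst (lopen N) M)) ->
  reducible (SArr U T) (LLam M).
Proof.
  intros Hbody N HN; apply reducible_beta_redex with U; auto.
  - apply (SN_lsubst_inv (lopen (LVar 0))), (reducible_SN T), Hbody, reducible_var.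
  - eapply reducible_SN; eassumption.
Qed.

Lemma lhas_type_reducible G M T : lhas_type G M T ->
  forall s, (forall n U, nth_error G n = Some U -> reducible U (s n)) ->
  reducible T (lsubst s M).
Proof.
  induction 1 as [G n T E|G T|G M U T _ IH|G M N U T _ IHM _ IHN]; intros s Hs; simpl.
  - apply Hs, E.
  - apply reducible_const.
  - apply reducible_lam; intros N HN.
    rewrite lopen_lup; apply IH.
    intros [|n] V E; simpl in E; [injection E as <-; exact HN | apply Hs, E].
  - apply (IHM s Hs), IHN, Hs.
Qed.

Lemma lhas_type_SN G M T : lhas_type G M T -> SN M.
Proof.
  intros H; rewrite <- lsubst_id.
  apply (reducible_SN T), (lhas_type_reducible G); auto using reducible_var.
Qed.

(** * Erasure *)

Fixpoint erase_ty (t : ty) : stype :=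
  match t with
  | TConst _ => SBase
  | TPi t1 t2 => SArr (erase_ty t1) (erase_ty t2)
  | TApp t _ | TCode _ t | TAll t => erase_ty t
  end.

Fixpoint erase (M : tm) : lterm :=
  match M with
  | Const _ => LConst
  | Var n => LVar n
  | Lam _ M => LLam (erase M)
  | App M N => LApp (erase M) (erase N)
  | Quote _ M | Esc _ M | Csp _ M | SLam M | SApp M _ => erase M
  end.

Definition erase_env (G : env) : list stype := map (fun p => erase_ty (fst p)) G.

Fixpoint slam_count (M : tm) : nat :=
  match M with
  | Const _ | Var _ => 0
  | Lam _ M | Quote _ M | Esc _ M | Csp _ M | SApp M _ => slam_count M
  | App M N => slam_count M + slam_count N
  | SLam M => S (slam_count M)
  end.

Fixpoint tm_size (M : tm) : nat :=
  match M with
  | Const _ | Var _ => 1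
  | Lam _ M | Quote _ M | Esc _ M | Csp _ M | SApp M _ | SLam M => S (tm_size M)
  | App M N => S (tm_size M + tm_size N)
  end.

Lemma erase_ty_codes l t : erase_ty (codes l t) = erase_ty t.
Proof. induction l; simpl; auto. Qed.

Lemma erase_ty_ssub t : forall s, erase_ty (ssub_ty s t) = erase_ty t.
Proof.
  induction t; intros; simpl; rewrite ?erase_ty_codes; congruence.
Qed.

Lemma erase_ty_ren t : forall r, erase_ty (ren_ty r t) = erase_ty t.
Proof. induction t; intros; simpl; congruence. Qed.

Lemma erase_ty_tsub t : forall s, erase_ty (tsub_ty s t) = erase_ty t.
Proof. induction t; intros; simpl; congruence. Qed.

Section StageWrappers.
Variables (X : Type) (f : tm -> X).

Lemma quotes_invariant :
  (forall a M, f (Quote a M) = f M) -> forall l M, f (quotes l M) = f M.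
Proof. intros H l M; induction l; simpl; congruence. Qed.

Lemma escs_invariant :
  (forall a M, f (Esc a M) = f M) -> forall l M, f (escs l M) = f M.
Proof. intros H l; induction l; intros; simpl; rewrite ?IHl; auto. Qed.

Lemma csps_invariant :
  (forall a M, f (Csp a M) = f M) -> forall l M, f (csps l M) = f M.
Proof. intros H l; induction l; intros; simpl; rewrite ?IHl; auto. Qed.

End StageWrappers.

Lemma erase_ssub M : forall s, erase (ssub_tm s M) = erase M.
Proof.
  induction M; intros; simpl;
    rewrite ?(quotes_invariant _ erase), ?(escs_invariant _ erase),
      ?(csps_invariant _ erase);
    auto; congruence.
Qed.

Lemma slam_count_ssub M : forall s, slam_count (ssub_tm s M) = slam_count M.
Proof.
  induction M; intros; simpl;
    rewrite ?(quotes_invariant _ slam_count), ?(escs_invariant _ slam_count),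
      ?(csps_invariant _ slam_count);
    auto; congruence.
Qed.

Lemma erase_ren M : forall r, erase (ren_tm r M) = lren r (erase M).
Proof. induction M; intros; simpl; congruence. Qed.

Lemma erase_tsub M : forall s, erase (tsub_tm s M) = lsubst (fun n => erase (s n)) (erase M).
Proof.
  induction M; intros; simpl; rewrite ?IHM, ?IHM1, ?IHM2; auto.
  - f_equal; apply lsubst_ext; intros [|n]; simpl; auto using erase_ren.
  - apply lsubst_ext; intros n; apply erase_ssub.
Qed.

Lemma erase_topen M N : erase (topen_tm M N) = lsubst (lopen (erase N)) (erase M).
Proof.
  unfold topen_tm; rewrite erase_tsub; apply lsubst_ext; intros [|n]; reflexivity.
Qed.

Scheme wf_env_mut := Induction for wf_env Sort Prop
with wf_kind_mut := Induction for wf_kind Sort Prop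
with has_kind_mut := Induction for has_kind Sort Prop
with has_type_mut := Induction for has_type Sort Prop
with eq_kind_mut := Induction for eq_kind Sort Prop
with eq_ty_mut := Induction for eq_ty Sort Prop
with eq_tm_mut := Induction for eq_tm Sort Prop.

Lemma has_type_erase Sg G M t A :
  has_type Sg G M t A -> lhas_type (erase_env G) (erase M) (erase_ty t).
Proof.
  revert G M t A.
  apply (has_type_mut Sg (fun _ _ => True) (fun _ _ _ _ => True) (fun _ _ _ _ _ => True)
    (fun G M t A _ => lhas_type (erase_env G) (erase M) (erase_ty t))
    (fun _ _ _ _ _ => True)
    (fun G t s K A _ => erase_ty t = erase_ty s)
    (fun _ _ _ _ _ _ => True));
  intros; unfold sclose_ty, sclose_tm, sopen_ty, topen_ty in *; simpl in *;
  rewrite ?erase_ty_ssub, ?erase_ty_ren, ?erase_ty_tsub, ?erase_ssub in *;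
  try congruence; auto.
  - constructor.
  - constructor; unfold erase_env; rewrite nth_error_map.
    match goal with E : nth_error _ _ = _ |- _ => rewrite E end; reflexivity.
  - constructor; assumption.
  - econstructor; eassumption.
Qed.

(** * Simulation of reduction by the erasure *)

Definition lex_lt (p q : nat * nat) : Prop :=
  fst p < fst q \/ (fst p = fst q /\ snd p < snd q).

Lemma lex_lt_wf : well_founded lex_lt.
Proof.
  apply wf_incl with (slexprod nat nat lt lt).
  - intros [a b] [a' b'] [H|[E H]]; simpl in *; subst; constructor; assumption.
  - apply wf_slexprod; apply lt_wf.
Qed.

Definition stage_measure (M : tm) : nat * nat := (slam_count M, tm_size M).

Lemma red_erase M M' : red M M' ->
  lstep (erase M) (erase M') \/
  (erase M' = erase M /\ lex_lt (stage_measure M') (stage_measure M)).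
Proof.
  unfold lex_lt, stage_measure; induction 1; simpl in *;
    try (destruct IHred as [Hstep|[Herase Hlt]];
         [left; try constructor; assumption
         | right; rewrite Herase; split; [reflexivity | lia]]).
  - left; rewrite erase_topen; constructor.
  - right; split; [reflexivity | lia].
  - right; unfold sopen_tm; rewrite erase_ssub, slam_count_ssub; split; [reflexivity | lia].
Qed.

Lemma Acc_red_of_SN_erase M :
  SN (erase M) -> Acc (fun N M => red M N) M.
Proof.
  remember (erase M) as e eqn:Ee; intros SN_e; revert M Ee.
  induction SN_e as [e _ IHe]; intros M ->.
  induction M as [M IHM] using (well_founded_induction
    (wf_inverse_image _ _ lex_lt stage_measure lex_lt_wf)).
  constructor; intros M' st.
  destruct (red_erase M M' st) as [Hstep|[Herase Hlt]].
  - apply (IHe (erase M') Hstep); reflexivity.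
  - apply IHM; [exact Hlt | rewrite Herase; exact IHe].
Qed.

Theorem theorem2 (Sg : sig) (G : env) (M1 : tm) (t : ty) (A : stage) :
  wf_sig Sg -> has_type Sg G M1 t A ->
  ~ (exists f : nat -> tm, f 0 = M1 /\ forall i : nat, red (f i) (f (S i))).
Proof.
  intros _ Hty.
  apply (Acc_no_descending_chain (fun N M => red M N)), Acc_red_of_SN_erase.
  exact (lhas_type_SN _ _ _ (has_type_erase _ _ _ _ _ Hty)).
Qed.
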